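(* Let $G$ be a graph of order $n\ge 1$. Then $$\frac{n^2+n+2}{2}\le d(G)\le 2^n.$$ The left equality holds if and only if $G\cong K_{n_1,n_2,\ldots,n_k}$ is a complete multipartite graph with $n_i\le 2$ for all $1\le i\le k$ and $n_1+\cdots+n_k=n$. The right equality holds if and only if $G\cong sK_1\cup tK_2$, a disjoint union of $s$ isolated vertices and $t$ disjoint edges, with $s+2t=n$.
   Context: All graphs are finite, simple and undirected. A subset $D\subseteq V(G)$ is a dissociation set of $G$ if the induced subgraph $G[D]$ has maximum degree at most $1$; the empty set is a dissociation set. $d(G)$ denotes the total number of dissociation sets of $G$, including the empty set. In particular, the graph with no vertices has $d=1$. *)

From mathcomp Require Import all_boot.
Set Implicit Arguments. Unset Strict Implicit. Unset Printing Implicit Defensive.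

Definition simple_graph (T : finType) (e : rel T) : Prop :=
  irreflexive e /\ symmetric e.

Definition dissociation (T : finType) (e : rel T) (D : {set T}) : bool :=
  [forall x in D, #|[set y in D | e x y]| <= 1].

Definition dnum (T : finType) (e : rel T) : nat :=
  #|[set D : {set T} | dissociation e D]|.

(* G is a complete multipartite graph K_{n_1,...,n_k} with all n_i <= 2:
   the vertices are partitioned into the (nonempty) fibres of a labelling p,
   each part has at most 2 vertices, and two distinct vertices are adjacent
   iff they lie in different parts. *)
Definition complete_multipartite_le2 (T : finType) (e : rel T) : Prop :=
  exists p : T -> nat,
    (forall i, #|[set x | p x == i]| <= 2) /\
    (forall x y, x != y -> e x y = (p x != p y)).

(* G is isomorphic to sK_1 ∪ tK_2: vertices partitioned into parts of size
   1 or 2 (fibres of p), edges are exactly the pairs of distinct vertices in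
   the same part. *)
Definition union_K1_K2 (T : finType) (e : rel T) : Prop :=
  exists p : T -> nat,
    (forall i, #|[set x | p x == i]| <= 2) /\
    (forall x y, e x y = (x != y) && (p x == p y)).

(* Every set of at most two vertices is a dissociation set, which gives the
   lower bound 1 + n + C(n,2), and trivially d(G) <= 2^n.  Equality holds at
   the bottom iff no three vertices form a dissociation set, i.e. iff every
   vertex has at most one non-neighbour; it holds at the top iff V(G) itself
   is a dissociation set, i.e. iff every vertex has at most one neighbour.  A
   symmetric relation in which every vertex has at most one partner is a
   partial matching, so between distinct vertices it coincides with "lies in
   the same block" for a partition into blocks of size at most 2.  For the
   non-adjacency relation this is K_{n_1,...,n_k} with all n_i <= 2, for the
   adjacency relation it is sK_1 ∪ tK_2. *)
From mathcomp Require Import all_boot.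
From mathcomp Require Import zify.

Set Implicit Arguments.
Unset Strict Implicit.
Unset Printing Implicit Defensive.

Lemma card_sets_le (T : finType) k :
  #|[set D : {set T} | #|D| <= k]| = \sum_(i < k.+1) 'C(#|T|, i).
Proof.
elim: k => [|k IHk].
  by rewrite big_ord1 -card_draws; apply: eq_card => D; rewrite !inE leqn0.
rewrite big_ord_recr /= -IHk -card_draws.
rewrite -(cardsID [set D : {set T} | #|D| <= k] [set D : {set T} | #|D| <= k.+1]).
apply: f_equal2; apply: eq_card => D; rewrite !inE.
  by apply/idP/idP => [/andP[] | le_k] //; rewrite le_k (leqW le_k).
by rewrite -ltnNge -eqn_leq.
Qed.

Lemma mul2_bin2 n : 2 * 'C(n, 2) = n * n.-1.
Proof.
by elim: n => [|n IHn] //; rewrite binS bin1 mulnDr IHn; case: n {IHn} => //= n; lia.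
Qed.

Lemma card_sets_le2 (T : finType) :
  2 * #|[set D : {set T} | #|D| <= 2]| = #|T| ^ 2 + #|T| + 2.
Proof.
rewrite card_sets_le !big_ord_recr big_ord0 /= bin0 bin1 !mulnDr mul2_bin2.
by case: #|T| => //= n; lia.
Qed.

Section Dissociation.

Variables (T : finType) (e : rel T).

Lemma dissociationS (D D' : {set T}) :
  D \subset D' -> dissociation e D' -> dissociation e D.
Proof.
move=> sDD' /forall_inP dissD'; apply/forall_inP => x xD.
apply: leq_trans (dissD' x (subsetP sDD' x xD)).
apply: subset_leq_card; apply/subsetP => y; rewrite !inE => /andP[yD ->].
by rewrite (subsetP sDD' y yD).
Qed.

Lemma dissociation_setT_all :
  dissociation e [set: T] -> forall D, dissociation e D.
Proof. by move=> dissT D; apply: dissociationS dissT; apply: subsetT. Qed.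

Lemma dissociation_setTP :
  reflect (forall x, #|[set y | e x y]| <= 1) (dissociation e [set: T]).
Proof.
apply: (iffP forall_inP) => deg x => [|_].
  apply: leq_trans (deg x (in_setT x)).
  by apply: eq_leq; apply: eq_card => y; rewrite !inE.
by apply: leq_trans (deg x); apply: eq_leq; apply: eq_card => y; rewrite !inE.
Qed.

Lemma dnum_le_exp2 : dnum e <= 2 ^ #|T|.
Proof.
by rewrite -cardsT -card_powerset powersetT; apply: subset_leq_card; apply: subsetT.
Qed.

Lemma dnum_eq_exp2P : dnum e = 2 ^ #|T| <-> dissociation e [set: T].
Proof.
have [_ eq_all] := subset_leqif_cards (subsetT [set D : {set T} | dissociation e D]).
rewrite -cardsT -card_powerset powersetT /dnum; split=> [/eqP | dissT].
  by rewrite eq_all => /eqP allD; have := in_setT [set: T]; rewrite -allD inE.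
apply/eqP; rewrite eq_all; apply/eqP/setP => D.
by rewrite !inE dissociation_setT_all.
Qed.

Lemma two_nbrs_not_dissociation (D : {set T}) w u v :
  w \in D -> u \in D -> v \in D -> u != v -> e w u -> e w v ->
  ~~ dissociation e D.
Proof.
move=> wD uD vD neq_uv ewu ewv; apply/negP => /forall_inP /(_ w wD).
by apply/negP; rewrite -ltnNge; apply/card_gt1P; exists u, v; rewrite !inE uD vD ewu ewv.
Qed.

Hypothesis e_irr : irreflexive e.

Lemma dissociation_card_le2 (D : {set T}) : #|D| <= 2 -> dissociation e D.
Proof.
move=> cardD; apply/forall_inP => x xD.
have: #|[set y in D | e x y]| <= #|D :\ x|.
  apply: subset_leq_card; apply/subsetP => y; rewrite !inE => /andP[-> exy].
  by rewrite andbT; apply: contraTneq exy => ->; rewrite e_irr.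
by move: cardD; rewrite (cardsD1 x D) xD; lia.
Qed.

Let small_sub_dissociation :
  [set D : {set T} | #|D| <= 2] \subset [set D | dissociation e D].
Proof. by apply/subsetP => D; rewrite !inE; apply: dissociation_card_le2. Qed.

Lemma card_small_le_dnum : #|[set D : {set T} | #|D| <= 2]| <= dnum e.
Proof. exact: subset_leq_card small_sub_dissociation. Qed.

Lemma dnum_eq_card_smallP :
  dnum e = #|[set D : {set T} | #|D| <= 2]| <-> (forall D, dissociation e D -> #|D| <= 2).
Proof.
have [_ eq_small] := subset_leqif_cards small_sub_dissociation.
rewrite /dnum; split=> [/eqP | small].
  rewrite eq_sym eq_small => /eqP eq_SD D dissD.
  have: D \in [set D : {set T} | dissociation e D] by rewrite inE.
  by rewrite -eq_SD inE.
apply/eqP; rewrite eq_sym eq_small eqEsubset small_sub_dissociation /=.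
by apply/subsetP => D; rewrite !inE; apply: small.
Qed.

Hypothesis e_sym : symmetric e.

(* A vertex other than [x] can only have the third vertex as a neighbour in [D]. *)
Lemma dissociation_isolated_card_le3 (D : {set T}) x :
  #|D| <= 3 -> x \in D -> (forall y, y \in D -> ~~ e x y) -> dissociation e D.
Proof.
move=> cardD xD isox; apply/forall_inP => w wD.
have [-> | neq_wx] := eqVneq w x.
  suff ->: [set y in D | e x y] = set0 by rewrite cards0.
  by apply/setP => y; rewrite !inE; case: (boolP (y \in D)) => // /isox /negbTE.
have: #|[set y in D | e w y]| <= #|D :\ w :\ x|.
  apply: subset_leq_card; apply/subsetP => y; rewrite !inE => /andP[-> ewy].
  rewrite andbT; apply/andP; split.
    by apply: contraTneq ewy => ->; rewrite e_sym; apply: isox.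
  by apply: contraTneq ewy => ->; rewrite e_irr.
move: cardD; rewrite (cardsD1 w D) wD (cardsD1 x (D :\ w)) !inE eq_sym neq_wx xD.
lia.
Qed.

End Dissociation.

Section MatchingPartition.

Variables (T : finType) (f : rel T).
Hypothesis f_sym : symmetric f.
Hypothesis f_deg : forall x, #|[set y | f x y]| <= 1.

Definition partner x := odflt x [pick y | f x y].

Lemma partnerE x y : f x y -> partner x = y.
Proof.
move=> fxy; rewrite /partner; case: pickP => [z fxz | /(_ y)]; last by rewrite fxy.
by apply: (card_le1_eqP (f_deg x)); rewrite inE.
Qed.

Lemma partner_adj x : partner x != x -> f x (partner x).
Proof. by rewrite /partner; case: pickP => [z ->|] //=; rewrite eqxx. Qed.

Lemma partnerK : involutive partner.
Proof.
move=> x; have [px_x | /partner_adj fx] := eqVneq (partner x) x; first by rewrite !px_x.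
by apply: partnerE; rewrite f_sym.
Qed.

Lemma adj_partner x y : x != y -> f x y = (partner x == y).
Proof.
move=> neq_xy; apply/idP/eqP => [/partnerE // | px_y].
by rewrite -px_y; apply: partner_adj; rewrite px_y eq_sym.
Qed.

Definition pair_label x := minn (enum_rank x) (enum_rank (partner x)).

Lemma pair_label_partner x : pair_label (partner x) = pair_label x.
Proof. by rewrite /pair_label partnerK minnC. Qed.

Lemma eq_pair_label x y :
  (pair_label x == pair_label y) = (y == x) || (y == partner x).
Proof.
apply/eqP/orP => [|[] /eqP ->]; rewrite ?pair_label_partner //.
have label_rank z : pair_label z = enum_rank z \/ pair_label z = enum_rank (partner z).
  by rewrite /pair_label /minn; case: ltnP; [left | right].
have [] := label_rank x; have [] := label_rank y => -> -> /ord_inj/enum_rank_inj.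
- by move=> ->; left.
- by move=> ->; right; rewrite partnerK.
- by move=> <-; right.
- by move/(can_inj partnerK) ->; left.
Qed.

Lemma card_pair_label_fibre i : #|[set x | pair_label x == i]| <= 2.
Proof.
have [-> | [x]] := set_0Vmem [set x | pair_label x == i]; first by rewrite cards0.
rewrite inE => /eqP <-.
apply: leq_trans (_ : #|[set x; partner x]| <= 2); last by rewrite cards2; case: eqP.
by apply: subset_leq_card; apply/subsetP => y; rewrite !inE eq_sym eq_pair_label.
Qed.

Lemma adj_pair_label x y : x != y -> f x y = (pair_label x == pair_label y).
Proof.
by move=> neq_xy; rewrite adj_partner // eq_pair_label [y == x]eq_sym (negbTE neq_xy) eq_sym.
Qed.

Lemma matching_partition :
  exists p : T -> nat, (forall i, #|[set x | p x == i]| <= 2) /\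
    (forall x y, x != y -> f x y = (p x == p y)).
Proof.
by exists pair_label; split; [apply: card_pair_label_fibre | apply: adj_pair_label].
Qed.

End MatchingPartition.

Section Extremal.

Variables (T : finType) (e : rel T).
Hypotheses (e_irr : irreflexive e) (e_sym : symmetric e).

Lemma union_K1_K2P : union_K1_K2 e <-> dissociation e [set: T].
Proof.
split=> [[p [card_p e_p]] | /dissociation_setTP deg].
  apply/dissociation_setTP => x.
  apply: leq_trans (_ : #|[set y | p y == p x] :\ x| <= 1).
    apply: subset_leq_card; apply/subsetP => y; rewrite !inE e_p.
    by case/andP => neq_xy /eqP ->; rewrite eq_sym neq_xy eqxx.
  by have := card_p (p x); rewrite (cardsD1 x) !inE eqxx; lia.
have [p [card_p e_p]] := matching_partition e_sym deg.
exists p; split=> // x y; have [-> | neq_xy] := eqVneq x y; first by rewrite e_irr.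
exact: e_p.
Qed.

Lemma complete_multipartite_le2P :
  complete_multipartite_le2 e <-> (forall D, dissociation e D -> #|D| <= 2).
Proof.
split=> [[p [card_p e_p]] D | small].
  apply: contraTT; rewrite -ltnNge.
  move=> /card_gt2P [a [b [c [[aD bD cD] [neq_ab neq_bc neq_ca]]]]].
  have neq_ac : a != c by rewrite eq_sym.
  have neq_ba : b != a by rewrite eq_sym.
  have neq_cb : c != b by rewrite eq_sym.
  have [pab | pab] := eqVneq (p a) (p b).
    have [pca | pca] := eqVneq (p c) (p a).
      suff: 2 < #|[set x | p x == p a]| by rewrite ltnNge card_p.
      by apply/card_gt2P; exists a, b, c; rewrite !inE pca -pab eqxx.
    by apply: (two_nbrs_not_dissociation cD aD bD neq_ab); rewrite e_p // -?pab.
  have [pac | pac] := eqVneq (p a) (p c).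
    by apply: (two_nbrs_not_dissociation bD aD cD neq_ac); rewrite e_p // -?pac eq_sym.
  by apply: (two_nbrs_not_dissociation aD bD cD neq_bc); rewrite e_p.
pose f x y := (x != y) && ~~ e x y.
have f_sym : symmetric f by move=> x y; rewrite /f eq_sym e_sym.
have f_deg x : #|[set y | f x y]| <= 1.
  rewrite leqNgt; apply/negP => /card_gt1P [y [z []]].
  rewrite !inE /f => /andP[neq_xy nexy] /andP[neq_xz nexz] neq_yz.
  have diss_xyz : dissociation e [set x; y; z].
    apply: (dissociation_isolated_card_le3 e_irr e_sym (x := x)).
    - by rewrite !cardsU !cards1; lia.
    - by rewrite !inE eqxx.
    - by move=> w; rewrite !inE => /orP[/orP[] | ] /eqP ->; rewrite ?e_irr.
  suff: 2 < #|[set x; y; z]| by rewrite ltnNge small.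
  by apply/card_gt2P; exists x, y, z; rewrite !inE !eqxx !orbT (eq_sym z).
have [p [card_p f_p]] := matching_partition f_sym f_deg.
by exists p; split=> // x y neq_xy; rewrite -f_p // /f neq_xy negbK.
Qed.

End Extremal.

Theorem theorem2p1 (T : finType) (e : rel T) :
  simple_graph e -> 1 <= #|T| ->
  [/\ #|T| ^ 2 + #|T| + 2 <= 2 * dnum e,
      dnum e <= 2 ^ #|T|,
      2 * dnum e = #|T| ^ 2 + #|T| + 2 <-> complete_multipartite_le2 e
    & dnum e = 2 ^ #|T| <-> union_K1_K2 e].
Proof.
move=> [e_irr e_sym] _; rewrite -card_sets_le2.
split.
- by rewrite leq_mul2l card_small_le_dnum.
- exact: dnum_le_exp2.
- apply: iff_trans (iff_trans (dnum_eq_card_smallP e_irr) _).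
    by split=> [/eqP | ->] //; rewrite eqn_mul2l => /eqP.
  exact: iff_sym (complete_multipartite_le2P e_irr e_sym).
- exact: iff_trans (dnum_eq_exp2P e) (iff_sym (union_K1_K2P e_irr e_sym)).
Qed.
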